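(* Let $N \ge \Delta \geq 2$ be integers. There exists a connected graph $G$ with $e(G)=N$, $\Delta(G)=\Delta$ and $e(L(G)) = f(N,\Delta)$; furthermore $n(G) \leq N+1$.
   Context: All graphs are finite and simple; $L(G)$ is the line graph of $G$; $n(\cdot)$, $e(\cdot)$, $\Delta(\cdot)$, $\delta(\cdot)$ denote number of vertices, number of edges, maximum degree and minimum degree. For integers $N \ge \Delta \ge 1$, $f(N,\Delta) = \max\{ e(L(G)) : e(G)=N, \Delta(G)=\Delta, \delta(G)\geq 1\}$, the maximum over all simple graphs $G$. *)

From mathcomp Require Import all_boot.
Unset Printing Implicit Defensive.

Record sgraph := SGraph {
  V : finType;
  adj : rel V;
  adj_sym : symmetric adj;
  adj_irr : irreflexive adj }.
Arguments adj : clear implicits.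

Definition nV (G : sgraph) : nat := #|V G|.

Definition Eset (G : sgraph) : {set {set V G}} :=
  [set [set x; y] | x in V G, y in V G & adj G x y].

Definition eG (G : sgraph) : nat := #|Eset G|.

Definition deg (G : sgraph) (v : V G) : nat := #|[set y | adj G v y]|.

(* Delta(G) (0 for the empty graph) *)
Definition maxdeg (G : sgraph) : nat := \max_(v : V G) deg G v.

Definition mindeg_ge1 (G : sgraph) : Prop := forall v : V G, 1 <= deg G v.

(* e(L(G)): number of edges of the line graph, i.e. unordered pairs of
   distinct edges of G sharing a vertex *)
Definition eL (G : sgraph) : nat :=
  #|[set [set a; b] | a in Eset G, b in Eset G & (a != b) && (a :&: b != set0)]|.

Definition connected (G : sgraph) : Prop :=
  forall x y : V G, connect (adj G) x y.

(* the class over which f(N,Delta) is a maximum *)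
Definition admissible (N D : nat) (G : sgraph) : Prop :=
  eG G = N /\ maxdeg G = D /\ mindeg_ge1 G.

Definition is_f (N D m : nat) : Prop :=
  (exists G, admissible N D G /\ eL G = m) /\
  (forall G, admissible N D G -> eL G <= m).

(* Since 2 e(L(G)) = sum_v deg v (deg v - 1), e(L(G)) depends only on the
   degree sequence. Among the graphs with N edges, maximum degree D and no
   isolated vertex, choose one maximising e(L(G)), and among those one
   maximising the number of ordered pairs of vertices joined by a path. Such a
   graph is connected. Otherwise take two components. If one of them contains
   an edge zq lying on a cycle, exchanging zq and an edge ab of the other
   component for za and qb keeps every degree but merges the two components.
   Otherwise both components have leaves, l1 and l2; moving the edge at l2
   over to l1 raises e(L(G)) by one, and deleting the now isolated l2 gives an
   admissible graph. A connected graph has at most e(G) + 1 vertices, and a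
   star with a path attached shows that the class is not empty. *)

From mathcomp Require Import all_boot zify.
From Stdlib Require Import Classical.
Set Implicit Arguments. Unset Strict Implicit. Unset Printing Implicit Defensive.

(** * Edges and pairs of adjacent edges *)

Definition upair_eq (T : eqType) (x y u v : T) :=
  (x == u) && (y == v) || (x == v) && (y == u).

Lemma upair_eqC (T : eqType) (x y u v : T) : upair_eq x y u v = upair_eq y x u v.
Proof. by rewrite /upair_eq orbC !(andbC (x == _)). Qed.

Lemma eq_set2 (T : finType) (a b x y : T) : a != b ->
  ([set a; b] == [set x; y]) = upair_eq a b x y.
Proof.
move=> nab; apply/eqP/idP => [E|]; last first.
  by case/orP=> /andP[/eqP-> /eqP->] //; rewrite setUC.
have: (a \in [set x; y]) && (b \in [set x; y]) by rewrite -E set21 set22.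
rewrite !in_set2 /upair_eq => /andP[].
by case/orP=> /eqP ea /orP[]/eqP eb; move: nab; rewrite ea eb ?eqxx ?orbT.
Qed.

Lemma set2K (T : finType) (v x y : T) : v != x -> [set v; x] = [set v; y] -> x = y.
Proof.
move=> vx E; have: x \in [set v; y] by rewrite -E set22.
by rewrite in_set2 eq_sym (negbTE vx) => /eqP.
Qed.

Lemma setI_set2 (T : finType) (v x y : T) : x != y ->
  [set v; x] :&: [set v; y] = [set v].
Proof.
move=> xy; apply/setP=> w; rewrite !inE.
by case: (eqVneq w v) => //= _; apply/andP=> -[/eqP-> /eqP ex]; rewrite ex eqxx in xy.
Qed.

Lemma card_doubletons (T : finType) (A : {pred T}) (R : rel T) :
  symmetric R -> irreflexive R ->
  #|[set [set x; y] | x in A, y in A & R x y]| * 2 =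
  #|[set p : T * T | [&& p.1 \in A, p.2 \in A & R p.1 p.2]]|.
Proof.
move=> Rsym Rirr; set S := [set p : T * T | _].
have -> : [set [set x; y] | x in A, y in A & R x y] = [set [set p.1; p.2] | p in S].
  apply/setP=> e; apply/imset2P/imsetP.
  - by case=> x y xA; rewrite inE => /andP[yA Rxy] ->; exists (x, y); rewrite // inE xA yA.
  - case=> -[x y]; rewrite inE /= => /and3P[xA yA Rxy] ->.
    by exists x y; rewrite // inE yA.
rewrite -[RHS]sum1_card (partition_big_imset (fun p : T * T => [set p.1; p.2])) /=.
rewrite -sum_nat_const; apply: eq_bigr => _ /imsetP[[x y] + ->] /=.
rewrite inE /= => /and3P[xA yA Rxy].
have xy : x != y by apply: contraTneq Rxy => ->; rewrite Rirr.
have <- : #|[set (x, y); (y, x)]| = 2 by rewrite cards2 xpair_eqE (negbTE xy).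
rewrite sum1dep_card; apply: eq_card => -[a b].
rewrite !inE /= !xpair_eqE; apply/idP/andP => [|[/and3P[_ _ Rab]]].
  by case/orP=> /andP[/eqP-> /eqP->]; rewrite ?xA ?yA ?Rxy ?(Rsym y) ?eqxx // setUC eqxx.
have ab : a != b by apply: contraTneq Rab => ->; rewrite Rirr.
by rewrite eq_set2.
Qed.

Lemma card_pairs_sum (T1 T2 : finType) (P : T1 -> T2 -> bool) :
  #|[set p : T1 * T2 | P p.1 p.2]| = \sum_a #|[set b | P a b]|.
Proof.
rewrite -sum1dep_card -(pair_big_dep xpredT P (fun _ _ => 1)) /=.
by apply: eq_bigr => a _; rewrite sum1dep_card.
Qed.

Lemma handshake (G : sgraph) : eG G * 2 = \sum_v deg G v.
Proof.
rewrite /eG /Eset card_doubletons ?card_pairs_sum //; last exact: adj_irr.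
exact: adj_sym.
Qed.

Lemma adj_neq (G : sgraph) (x y : V G) : adj G x y -> x != y.
Proof. by apply: contraTneq => ->; rewrite adj_irr. Qed.

Lemma ex_neighbour (G : sgraph) (v : V G) : 0 < deg G v -> exists w, adj G v w.
Proof. by case/card_gt0P=> w; rewrite inE; exists w. Qed.

Lemma in_Eset (G : sgraph) (x y : V G) : adj G x y -> [set x; y] \in Eset G.
Proof. by move=> xy; apply/imset2P; exists x y; rewrite // inE. Qed.

Lemma edge_at (G : sgraph) (e : {set V G}) (v : V G) :
  e \in Eset G -> v \in e -> exists2 o, adj G v o & e = [set v; o].
Proof.
case/imset2P=> x y _; rewrite inE => xy ->; rewrite in_set2.
by case/orP=> /eqP->; [exists y | exists x; rewrite 1?setUC // adj_sym].
Qed.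

Lemma card_other_neighbours (G : sgraph) (v x : V G) : adj G v x ->
  #|[set y | adj G v y & x != y]| = (deg G v).-1.
Proof.
move=> vx; rewrite /deg (cardsD1 x [set y | adj G v y]) inE vx add1n /=.
by apply: eq_card => y; rewrite !inE andbC eq_sym.
Qed.

Lemma eL_formula (G : sgraph) : eL G * 2 = \sum_v deg G v * (deg G v).-1.
Proof.
rewrite /eL card_doubletons; [|by move=> a b; rewrite eq_sym setIC|by move=> a; rewrite eqxx].
(* An ordered pair of adjacent edges is ({v, x}, {v, y}) for a unique triple
   (v, x, y) of a vertex and two distinct neighbours. *)
pose P v (p : V G * V G) := [&& adj G v p.1, adj G v p.2 & p.1 != p.2].
pose g t := ([set t.1; t.2.1], [set t.1; t.2.2]) : {set V G} * {set V G}.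
have -> : [set p | [&& p.1 \in Eset G, p.2 \in Eset G
                     & (p.1 != p.2) && (p.1 :&: p.2 != set0)]] = g @: [set t | P t.1 t.2].
  apply/setP=> -[a b]; rewrite inE /=; apply/idP/imsetP.
  - case/and3P=> aE bE /andP[ab /set0Pn[v]]; rewrite inE => /andP[va vb].
    have [x vx Ea] := edge_at aE va; have [y vy Eb] := edge_at bE vb.
    exists (v, (x, y)); last by rewrite Ea Eb.
    by rewrite inE /P /= vx vy; apply: contra ab; rewrite Ea Eb => /eqP->.
  - case=> -[v [x y]]; rewrite inE /P /= => /and3P[vx vy xy] [-> ->].
    rewrite !in_Eset //= setI_set2 // -card_gt0 cards1 andbT.
    by apply: contra xy => /eqP/(set2K (adj_neq vx))->.
rewrite card_in_imset; last first.
  move=> [v [x y]] [v' [x' y']]; rewrite !inE /P /= => /and3P[vx vy xy] /and3P[vx' vy' xy'].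
  case=> Ex Ey; have Ev : [set v] = [set v'].
    by rewrite -(setI_set2 v xy) -(setI_set2 v' xy') Ex Ey.
  by move/set1_inj: Ev Ex Ey => <- /(set2K (adj_neq vx))-> /(set2K (adj_neq vy))->.
rewrite card_pairs_sum; apply: eq_bigr => v _.
rewrite (card_pairs_sum (fun x y => [&& adj G v x, adj G v y & x != y])).
rewrite (eq_bigr (fun x => if adj G v x then (deg G v).-1 else 0)).
  by rewrite -big_mkcond sum_nat_cond_const.
move=> x _; case: ifP => vx.
  by rewrite -(card_other_neighbours vx); apply: eq_card => y; rewrite !inE.
by apply: eq_card0 => y; rewrite !inE.
Qed.

Lemma leq_deg_maxdeg (G : sgraph) (v : V G) : deg G v <= maxdeg G.
Proof. exact: leq_bigmax. Qed.

Lemma maxdeg_attained (G : sgraph) : 0 < maxdeg G -> exists v, deg G v = maxdeg G.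
Proof.
rewrite /maxdeg; case: (pickP (V G)) => [v0 _ _|V0]; last by rewrite big_pred0.
by exists [arg max_(v > v0) deg G v]; rewrite (bigmax_eq_arg v0).
Qed.

Lemma maxdegE (G : sgraph) (D : nat) :
  (forall v, deg G v <= D) -> (exists v, deg G v = D) -> maxdeg G = D.
Proof.
move=> degD [v vD]; apply/eqP; rewrite eqn_leq -{2}vD leq_deg_maxdeg andbT.
by apply/bigmax_leqP => u _; apply: degD.
Qed.

Lemma card_set_sum (T : finType) (P : pred T) : #|[set x | P x]| = \sum_x P x.
Proof. by rewrite -sum1dep_card big_mkcond. Qed.

Lemma sum_eq1 (T : finType) (u : T) : \sum_(x : T) (x == u) = 1.
Proof. by rewrite -card_set_sum -(cards1 u); apply: eq_card => x; rewrite !inE. Qed.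

Lemma degE (G : sgraph) (v : V G) : deg G v = \sum_y adj G v y.
Proof. exact: card_set_sum. Qed.

Definition same_degseq (G H : sgraph) :=
  exists2 f : V H -> V G, bijective f & forall v, deg H v = deg G (f v).

Lemma same_degseq_sum (G H : sgraph) (F : nat -> nat) : same_degseq G H ->
  \sum_(v : V H) F (deg H v) = \sum_(v : V G) F (deg G v).
Proof.
case=> f /onW_bij fbij degf; rewrite (reindex f (fbij _)).
by apply: eq_bigr => v _; rewrite degf.
Qed.

Lemma same_degseq_eL (G H : sgraph) : same_degseq G H -> eL H = eL G.
Proof.
move=> GH; apply/eqP; rewrite -(eqn_pmul2r (isT : 0 < 2)) !eL_formula.
by rewrite (same_degseq_sum (fun d => d * d.-1) GH).
Qed.

Lemma same_degseq_admissible (G H : sgraph) (N D : nat) :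
  same_degseq G H -> admissible N D G -> admissible N D H.
Proof.
move=> GH [<- [<- Gmin]]; have [f fbij degf] := GH; split; [|split].
- apply/eqP; rewrite -(eqn_pmul2r (isT : 0 < 2)) !handshake.
  by rewrite (same_degseq_sum id GH).
- rewrite /maxdeg (reindex f) /=; last exact: onW_bij.
  by apply: eq_bigr => v _; rewrite degf.
- by move=> v; rewrite degf.
Qed.

(** * Rotating an edge *)

Lemma card_upair_eq (T : finType) (x t u : T) : t != u ->
  #|[set y | upair_eq x y t u]| = (x == t) + (x == u).
Proof.
move=> tu; rewrite /upair_eq; case: (eqVneq x t) => [->|xt] /=.
  by rewrite (negbTE tu) /= addn0 -(cards1 u); apply: eq_card => y; rewrite !inE orbF.
case: (eqVneq x u) => [_|xu] /=; last by apply: eq_card0 => y; rewrite !inE.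
by rewrite -(cards1 t); apply: eq_card => y; rewrite !inE.
Qed.

Lemma upair_eq_inj (T : eqType) (x y t u w : T) : t != u -> t != w ->
  upair_eq x y t u -> upair_eq x y t w -> u = w.
Proof.
move=> tu tw /orP[]/andP[/eqP-> /eqP->] /orP[]/andP[/eqP e1 /eqP e2] //.
- by rewrite e1 eqxx in tw.
- by rewrite e1 eqxx in tu.
Qed.

Definition adj_del (G : sgraph) (t u : V G) : rel (V G) :=
  fun x y => adj G x y && ~~ upair_eq x y t u.

Section Rotate.
Variables (G : sgraph) (t u w : V G).

(* The guard t != w makes the relation irreflexive without any hypothesis. *)
Definition rotate_rel : rel (V G) :=
  fun x y => adj_del t u x y || (t != w) && upair_eq x y t w.

Lemma rotate_rel_sym : symmetric rotate_rel.
Proof. by move=> x y; rewrite /rotate_rel /adj_del adj_sym !(upair_eqC x). Qed.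

Lemma rotate_rel_irr : irreflexive rotate_rel.
Proof.
move=> x; rewrite /rotate_rel /adj_del adj_irr /upair_eq /= [(x == w) && _]andbC orbb.
by apply/negP=> /andP[+ /andP[/eqP xt /eqP xw]]; rewrite -xt xw eqxx.
Qed.

Definition rotate := SGraph _ _ rotate_rel_sym rotate_rel_irr.

Lemma adj_rotate_del x y : adj_del t u x y -> adj rotate x y.
Proof. by rewrite /= /rotate_rel => ->. Qed.

Hypotheses (tu : adj G t u) (ntw : ~~ adj G t w) (tw : t != w).

Lemma adj_rotate_new : adj rotate t w.
Proof. by rewrite /= /rotate_rel tw /upair_eq !eqxx orbT. Qed.

Hypothesis uw : u != w.

Lemma deg_rotate v : deg rotate v + (v == u) = deg G v + (v == w).
Proof.
have tu' := adj_neq tu.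
suff: deg rotate v + #|[set y | upair_eq v y t u]| =
      deg G v + #|[set y | upair_eq v y t w]|.
  by rewrite !card_upair_eq //; lia.
rewrite !degE !card_set_sum -!big_split; apply: eq_bigr => y _ /=.
have adj_tu : upair_eq v y t u -> adj G v y.
  by case/orP=> /andP[/eqP-> /eqP->]; rewrite // adj_sym.
have nadj_tw : upair_eq v y t w -> ~~ adj G v y.
  by case/orP=> /andP[/eqP-> /eqP->]; rewrite // adj_sym.
have not_both : upair_eq v y t u -> upair_eq v y t w -> false.
  by move=> P Q; have := uw; rewrite (upair_eq_inj tu' tw P Q) eqxx.
rewrite /rotate_rel /adj_del tw.
have [P|nP] := boolP (upair_eq v y t u); have [Q|nQ] := boolP (upair_eq v y t w).
- by have := not_both P Q.
- by rewrite (adj_tu P).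
- by rewrite (negbTE (nadj_tw Q)).
- by rewrite andbT orbF.
Qed.

Lemma eG_rotate : eG rotate = eG G.
Proof.
apply/eqP; rewrite -(eqn_pmul2r (isT : 0 < 2)) !handshake -(eqn_add2r 1).
rewrite -{1}(sum_eq1 u) -(sum_eq1 w) -!big_split.
by apply/eqP/eq_bigr => v _; apply: deg_rotate.
Qed.

Hypotheses (u1 : deg G u = 1) (w1 : deg G w = 1).

Lemma deg_rotate_leaves v :
  deg rotate v = if v == w then 2 else if v == u then 0 else deg G v.
Proof.
have := deg_rotate v; case: (eqVneq v w) => [->|_].
  by rewrite eq_sym (negbTE uw) w1 /=; lia.
by case: (eqVneq v u) => [->|_]; rewrite ?u1; lia.
Qed.

Lemma eL_rotate_leaves : eL rotate = (eL G).+1.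
Proof.
apply/eqP; rewrite -(eqn_pmul2r (isT : 0 < 2)) mulSn !eL_formula.
have -> : \sum_v deg rotate v * (deg rotate v).-1 =
           \sum_v (deg G v * (deg G v).-1 + (v == w) * 2).
  apply: eq_bigr => v _; rewrite deg_rotate_leaves.
  case: (eqVneq v w) => [->|_]; first by rewrite w1.
  by case: (eqVneq v u) => [->|_]; rewrite ?u1 ?addn0.
by rewrite big_split /= -big_distrl sum_eq1 addnC.
Qed.

Lemma maxdeg_rotate_leaves : 2 <= maxdeg G -> maxdeg rotate = maxdeg G.
Proof.
move=> maxdeg2; apply: maxdegE => [v|].
  by rewrite deg_rotate_leaves; case: ifP => // _; case: ifP => // _; apply: leq_deg_maxdeg.
have [c cmax] := maxdeg_attained (ltnW maxdeg2); exists c.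
have deg_c_gt1 : 1 < deg G c by rewrite cmax.
rewrite deg_rotate_leaves; case: (eqVneq c w) => [cw|_]; first by rewrite cw w1 in deg_c_gt1.
by case: (eqVneq c u) => [cu|//]; rewrite cu u1 in deg_c_gt1.
Qed.

End Rotate.
Arguments rotate : clear implicits.

Definition conn_pairs (G : sgraph) : nat :=
  #|[set p : V G * V G | connect (adj G) p.1 p.2]|.

Lemma connect_sub_in (T : finType) (e e' : rel T) (x y : T) :
  (forall u v, connect e x u -> e u v -> e' u v) -> connect e x y -> connect e' x y.
Proof.
move=> ee' /connectP[p xp ->]; apply/connectP; exists p => //.
have sub : {in connect e x &, subrel e e'} by move=> u v xu _; apply: ee'.
have xp_conn : all (connect e x) (x :: p) by apply/allP/path_connect.
exact: (@sub_in_path T (connect e x) e e' sub x p xp_conn xp).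
Qed.

Lemma connect_adj (G : sgraph) (z x y : V G) :
  connect (adj G) z x -> adj G x y -> connect (adj G) z y.
Proof. by move=> zx /connect1; apply: connect_trans. Qed.

Lemma rotate2_same_degseq (G : sgraph) (z q a b : V G) :
  adj G z q -> ~~ adj G z a -> z != a -> q != a ->
  adj (rotate G z q a) b a -> ~~ adj (rotate G z q a) b q -> b != q ->
  same_degseq G (rotate (rotate G z q a) b a q).
Proof.
move=> zq nza za qa ba nbq bq; exists id => [|v]; first by exists id.
apply/eqP; rewrite -(eqn_add2r (v == a)) (deg_rotate ba nbq bq) 1?eq_sym //.
by rewrite (deg_rotate zq nza za qa).
Qed.

(* The 2-switch {zq, ab} -> {za, qb}, performed as two rotations. *)
Section Switch.
Variables (G : sgraph) (z q a b : V G).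
Hypotheses (zq : adj G z q) (ab : adj G a b) (nza : ~~ connect (adj G) z a).
Hypothesis zq_cycle : connect (adj_del z q) q z.

Let conn_zq : connect (adj G) z q. Proof. exact: connect1. Qed.
Let nzb : ~~ connect (adj G) z b.
Proof. by apply: contra nza => zb; apply: connect_adj zb _; rewrite adj_sym. Qed.
Let neq_comp x y : connect (adj G) z x -> ~~ connect (adj G) z y -> x != y.
Proof. by move=> zx; apply: contraNneq => <-. Qed.
Let nadj_comp x y : connect (adj G) z x -> ~~ connect (adj G) z y -> ~~ adj G x y.
Proof. by move=> zx; apply: contra => /(connect_adj zx). Qed.

Let z_a := neq_comp (connect0 _ z) nza.
Let z_b := neq_comp (connect0 _ z) nzb.
Let q_a := neq_comp conn_zq nza.
Let q_b := neq_comp conn_zq nzb.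
Let neqs := (negbTE z_a, negbTE z_b, negbTE q_a, negbTE q_b).

Let H1 := rotate G z q a.
Let H := rotate H1 b a q.

Let H1ba : adj H1 b a.
Proof.
apply: (adj_rotate_del a); rewrite /adj_del adj_sym ab /upair_eq.
by rewrite ![_ == z]eq_sym ![_ == q]eq_sym !neqs.
Qed.

Let H1bq : ~~ adj H1 b q.
Proof.
rewrite /= /rotate_rel /adj_del adj_sym (negbTE (nadj_comp conn_zq nzb)) z_a /upair_eq.
by rewrite ![_ == z]eq_sym !neqs (eq_sym b a) (negbTE (adj_neq ab)).
Qed.

Let b_q : b != q. Proof. by rewrite eq_sym. Qed.

Let H_degseq : same_degseq G H.
Proof. exact: rotate2_same_degseq zq (nadj_comp (connect0 _ z) nza) z_a q_a H1ba H1bq b_q. Qed.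

Let adj_H x y : connect (adj G) z x -> adj_del z q x y -> adj H x y.
Proof.
move=> zx xy; apply: adj_rotate_del; apply/andP; split; first exact: adj_rotate_del.
by rewrite /upair_eq (negbTE (neq_comp zx nzb)) (negbTE (neq_comp zx nza)).
Qed.

Let connect_Hsym := sym_connect_sym (adj_sym H).

(* The cycle through zq stays in the component of z, so it avoids ab. *)
Let connect_Hqz : connect (adj H) q z.
Proof.
apply: connect_sub_in zq_cycle => x y qx; apply: adj_H.
by apply: connect_trans conn_zq (connect_sub _ qx) => u v /andP[uv _]; apply: connect1.
Qed.

Let adj_Hza : adj H z a.
Proof.
apply: adj_rotate_del; apply/andP; split; first exact: adj_rotate_new.
by rewrite /upair_eq !neqs.
Qed.

Let connect_Hab : connect (adj H) a b.
Proof.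
have Hbq : adj H b q := adj_rotate_new (G := H1) a b_q.
rewrite connect_Hsym (connect_trans (connect1 Hbq)) //.
by rewrite (connect_trans connect_Hqz) // connect1.
Qed.

Let connect_H x y : connect (adj G) x y -> connect (adj H) x y.
Proof.
apply: connect_sub => {}x {}y xy.
have [/orP[]/andP[/eqP-> /eqP->]|nzq] := boolP (upair_eq x y z q).
- by rewrite connect_Hsym.
- exact: connect_Hqz.
have [/orP[]/andP[/eqP-> /eqP->]|nba] := boolP (upair_eq x y b a).
- by rewrite connect_Hsym.
- exact: connect_Hab.
by apply/connect1/adj_rotate_del/andP; split => //; apply/adj_rotate_del/andP.
Qed.

Lemma switch_connects : exists2 H, same_degseq G H & conn_pairs G < conn_pairs H.
Proof.
exists H => //; apply: proper_card; apply/properP; split.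
  by apply/subsetP=> -[x y]; rewrite !inE; apply: connect_H.
by exists (z, a); rewrite inE //= connect1.
Qed.

End Switch.

(** * Leaves and cycle edges *)

Lemma ex_maximal_upath (G : sgraph) (s : V G) :
  exists p, [/\ path (adj G) s p, uniq (s :: p) &
             forall y, adj G (last s p) y -> y \in s :: p].
Proof.
pose P k := [exists p : k.-tuple (V G), path (adj G) s p && uniq (s :: p)].
have P0 : P 0 by apply/existsP; exists [tuple].
have Pbound k : P k -> k <= #|V G|.
  case/existsP=> p /andP[_ up]; have := max_card (mem (s :: p)).
  by rewrite (card_uniqP up) /= size_tuple => /ltnW.
have [k /existsP[[p /= /eqP sizep] /andP[sp up]] kmax] := ex_maxnP (ex_intro _ 0 P0) Pbound.
exists p; split => // y ly; apply/negPn/negP => yp.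
have sizepy : size (rcons p y) == k.+1 by rewrite size_rcons sizep.
have spy : uniq (rcons (s :: p) y) by rewrite rcons_uniq yp.
have /kmax : P k.+1.
  by apply/existsP; exists (Tuple sizepy); rewrite /= rcons_path sp ly; exact: spy.
by rewrite ltnn.
Qed.

Lemma upath_connect_del (G : sgraph) (q : V G) (p : seq (V G)) :
  path (adj G) q p -> uniq (q :: p) -> 1 < size p ->
  connect (adj_del (last q p) q) q (last q p).
Proof.
case: p => [|u [|u' p]] //= /andP[qu up] /andP[qp /andP[up' _]] _.
have uz : u != last u' p by apply: contraNneq up' => ->; apply: mem_last.
have qu' : q != u by apply: contraNneq qp => ->; apply: mem_head.
apply/connectP; exists (u :: u' :: p) => //=; apply/andP; split.
  by rewrite /adj_del qu /upair_eq eqxx (eq_sym u) (negbTE qu') (negbTE uz) andbF.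
have sub : {in [pred x | x != q] &, subrel (adj G) (adj_del (last u' p) q)}.
  by move=> x y xq yq xy; rewrite /adj_del xy /upair_eq (negbTE xq) (negbTE yq) !andbF.
have notq : all [pred x | x != q] (u :: u' :: p).
  by apply/allP => x xin; apply: contraNneq qp => <-.
exact: (sub_in_path sub notq up).
Qed.

(* [nth s (rev (s :: p)) 1] is the vertex preceding the end of the path. *)
Lemma end_neighbour (G : sgraph) (s q : V G) (p : seq (V G)) :
  path (adj G) s p -> uniq (s :: p) -> q \in s :: p -> adj G (last s p) q ->
  q = nth s (rev (s :: p)) 1 \/ connect (adj_del (last s p) q) q (last s p).
Proof.
move=> sp up qin zq.
have [p1 [p2 E]] : exists p1 p2, s :: p = p1 ++ q :: p2.
  by case/splitPr: qin => p1 p2; exists p1, p2.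
have lastE : last s p = last q p2 by rewrite -[last s p]/(last s (s :: p)) E last_cat.
have qp2 : path (adj G) q p2.
  by move: sp; rewrite -[path _ s p]/(sorted (adj G) (s :: p)) E sorted_cat_cons => /andP[].
have uq : uniq (q :: p2) by move: up; rewrite E cat_uniq => /and3P[].
rewrite lastE in zq *; case: p2 => [|y [|y' p2]] in E lastE qp2 uq zq *.
- by rewrite adj_irr in zq.
- by left; rewrite E rev_cat.
- by right; apply: upath_connect_del.
Qed.

(* The end of a longest path from s is a leaf, or it has a second neighbour on
   the path, which closes a cycle. *)
Lemma leaf_or_cycle_edge (G : sgraph) (s : V G) : 0 < deg G s ->
  (exists2 l, connect (adj G) s l & deg G l = 1) \/
  (exists z q, [/\ connect (adj G) s z, adj G z q & connect (adj_del z q) q z]).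
Proof.
move=> s_deg; have [p [sp up pmax]] := ex_maximal_upath s.
have sz : connect (adj G) s (last s p) := path_connect sp (mem_last s p).
have z_deg : 0 < deg G (last s p).
  case/lastP: p sp {up pmax sz} => [//|r y]; rewrite rcons_path last_rcons => /andP[_ ry].
  by apply/card_gt0P; exists (last s r); rewrite inE adj_sym.
case: (ltngtP (deg G (last s p)) 1) => [|z_deg2|z_leaf]; last by left; exists (last s p).
  by rewrite ltnNge z_deg.
right; case/card_gt1P: z_deg2 => q1 [q2 []]; rewrite !inE => zq1 zq2 q12.
case: (end_neighbour sp up (pmax _ zq1) zq1) => [e1|]; last by exists (last s p), q1.
case: (end_neighbour sp up (pmax _ zq2) zq2) => [e2|]; last by exists (last s p), q2.
by rewrite e1 e2 eqxx in q12.
Qed.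

Section DelIsolated.
Variable G : sgraph.

Definition del_isolated_rel : rel {x : V G | 0 < deg G x} :=
  fun x y => adj G (val x) (val y).

Lemma del_isolated_rel_sym : symmetric del_isolated_rel.
Proof. by move=> x y; apply: adj_sym. Qed.

Lemma del_isolated_rel_irr : irreflexive del_isolated_rel.
Proof. by move=> x; apply: adj_irr. Qed.

Definition del_isolated := SGraph _ _ del_isolated_rel_sym del_isolated_rel_irr.

Lemma deg_del_isolated x : deg del_isolated x = deg G (val x).
Proof.
rewrite /deg -(card_imset _ val_inj); apply: eq_card => y; rewrite inE.
apply/imsetP/idP => [[y' + ->]|xy]; first by rewrite inE.
have y_deg : 0 < deg G y by apply/card_gt0P; exists (val x); rewrite inE adj_sym.
by exists (exist _ y y_deg); rewrite ?inE.
Qed.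

Lemma sum_deg_del_isolated (F : nat -> nat) : F 0 = 0 ->
  \sum_(x : V del_isolated) F (deg del_isolated x) = \sum_v F (deg G v).
Proof.
move=> F0; under eq_bigr do rewrite deg_del_isolated.
rewrite -(big_sub [pred v | 0 < deg G v] (fun v => F (deg G v))) big_mkcond /=.
by apply: eq_bigr => v _; rewrite inE lt0n; case: eqP => // ->.
Qed.

Lemma eL_del_isolated : eL del_isolated = eL G.
Proof.
apply/eqP; rewrite -(eqn_pmul2r (isT : 0 < 2)) !eL_formula.
by rewrite (@sum_deg_del_isolated (fun d => d * d.-1)).
Qed.

Lemma del_isolated_admissible : 0 < maxdeg G -> admissible (eG G) (maxdeg G) del_isolated.
Proof.
move=> maxdeg_gt0; split; [|split].
- apply/eqP; rewrite -(eqn_pmul2r (isT : 0 < 2)) !handshake.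
  by rewrite (@sum_deg_del_isolated id).
- apply: maxdegE => [x|]; first by rewrite deg_del_isolated leq_deg_maxdeg.
  have [v v_max] := maxdeg_attained maxdeg_gt0.
  have v_deg : 0 < deg G v by rewrite v_max.
  by exists (exist _ v v_deg); rewrite deg_del_isolated.
- by case=> v v_deg; rewrite deg_del_isolated.
Qed.

End DelIsolated.

Definition point_rel : rel unit := fun _ _ => false.
Definition point_graph := SGraph _ point_rel (fun _ _ => erefl) (fun _ => erefl).

Lemma deg_point_graph v : deg point_graph v = 0.
Proof. by apply: eq_card0 => y; rewrite inE. Qed.

Lemma eG_point_graph : eG point_graph = 0.
Proof.
apply/eqP; rewrite -(eqn_pmul2r (isT : 0 < 2)) handshake.
by rewrite big1 // => v _; rewrite deg_point_graph.
Qed.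

Lemma sum_option (T : finType) (F : option T -> nat) :
  \sum_(x : option T) F x = F None + \sum_(x : T) F (Some x).
Proof.
by rewrite ![index_enum _]unlock [@Finite.enum in LHS]unlock /= /option_enum big_cons big_map.
Qed.

Section Pendant.
Variables (G : sgraph) (u : V G).

Definition pendant_rel : rel (option (V G)) := fun x y =>
  match x, y with
  | Some a, Some b => adj G a b
  | Some a, None => a == u
  | None, Some b => b == u
  | None, None => false
  end.

Lemma pendant_rel_sym : symmetric pendant_rel.
Proof. by move=> [a|] [b|] //=; rewrite adj_sym. Qed.

Lemma pendant_rel_irr : irreflexive pendant_rel.
Proof. by move=> [a|] //=; rewrite adj_irr. Qed.

Definition add_pendant := SGraph _ _ pendant_rel_sym pendant_rel_irr.

Lemma deg_pendant_new : deg add_pendant None = 1.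
Proof. by rewrite -(cards1 (Some u)); apply: eq_card => -[y|]; rewrite !inE. Qed.

Lemma deg_pendant x : deg add_pendant (Some x) = deg G x + (x == u).
Proof. by rewrite !degE sum_option /= addnC. Qed.

Lemma eG_pendant : eG add_pendant = (eG G).+1.
Proof.
apply/eqP; rewrite -(eqn_pmul2r (isT : 0 < 2)) mulSn !handshake sum_option.
under eq_bigr do rewrite deg_pendant.
by rewrite deg_pendant_new big_split /= (sum_eq1 u); lia.
Qed.

End Pendant.

(* Pendant edges are added at c until it has degree D, then at the end w of a
   growing path. *)
Lemma ex_broom (D : nat) : 2 <= D -> forall j,
  exists G : sgraph, [/\ eG G = j, forall v, deg G v <= D,
    exists c, deg G c = minn j D & exists w, deg G w <= 1].
Proof.
move=> D2; elim=> [|j [G [Gj degD [c cmin] [w w1]]]].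
  exists point_graph; split; first exact: eG_point_graph.
  - by move=> v; rewrite deg_point_graph.
  - by exists tt; rewrite deg_point_graph min0n.
  - by exists tt; rewrite deg_point_graph.
have [jD|Dj] := leqP D j.
- exists (add_pendant w); split; first by rewrite eG_pendant Gj.
  + case=> [v|]; rewrite ?deg_pendant ?deg_pendant_new; last exact: ltnW.
    by case: eqP => [->|_]; rewrite ?addn1 ?addn0 ?degD //; apply: leq_trans D2.
  + exists (Some c); rewrite deg_pendant; have cw : c != w.
      by apply: contraTneq w1 => <-; rewrite cmin -ltnNge (minn_idPr jD).
    by rewrite (negbTE cw) addn0 cmin !(minn_idPr _) // ltnW.
  + by exists None; rewrite deg_pendant_new.
- exists (add_pendant c); split; first by rewrite eG_pendant Gj.
  + case=> [v|]; rewrite ?deg_pendant ?deg_pendant_new; last exact: ltnW.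
    by case: eqP => [->|_]; rewrite ?addn1 ?addn0 ?degD // cmin (minn_idPl (ltnW Dj)).
  + by exists (Some c); rewrite deg_pendant eqxx addn1 cmin !(minn_idPl _) // ltnW.
  + by exists None; rewrite deg_pendant_new.
Qed.

(* d y is the length of a shortest path from r to y. *)
Lemma ex_descent (G : sgraph) (r : V G) : connected G ->
  exists d : V G -> nat, forall y, y != r -> exists2 p, adj G y p & d p < d y.
Proof.
move=> Gconn.
pose P y k := [exists p : k.-tuple (V G), path (adj G) r p && (last r p == y)].
have Pex y : exists k, P y k.
  case/connectP: (Gconn r y) => p rp ->.
  by exists (size p); apply/existsP; exists (in_tuple p); rewrite /= rp eqxx.
exists (fun y => ex_minn (Pex y)) => y yr.
case: ex_minnP => k /existsP[[p /= /eqP sizep] /andP[rp /eqP py]] _.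
case/lastP: p sizep rp py => [|p x] sizep; first by move=> _ /= ry; rewrite ry eqxx in yr.
rewrite rcons_path last_rcons => /andP[rp px] <-{y yr}.
exists (last r p); first by rewrite adj_sym.
case: ex_minnP => k' _ /(_ (size p)) k'min; rewrite -sizep size_rcons ltnS k'min //.
by apply/existsP; exists (in_tuple p); rewrite /= rp eqxx.
Qed.

(* y |-> {y, f y}, with f y a neighbour closer to r, injects V - {r} into E. *)
Lemma card_le_eG_descent (G : sgraph) (r : V G) (d : V G -> nat) :
  (forall y, y != r -> exists2 p, adj G y p & d p < d y) -> #|V G| <= (eG G).+1.
Proof.
move=> descent; pose f y := odflt r [pick p | adj G y p && (d p < d y)].
have fP y : y != r -> adj G y (f y) && (d (f y) < d y).
  move=> yr; rewrite /f; case: pickP => [//|none].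
  by have [p yp dp] := descent y yr; have := none p; rewrite yp dp.
have f_inj : {in [set y | y != r] &, injective (fun y => [set y; f y])}.
  move=> y y'; rewrite !inE => yr y'r /eqP.
  have /andP[yf dy] := fP y yr; have /andP[y'f dy'] := fP y' y'r.
  rewrite eq_set2 ?adj_neq // /upair_eq => /orP[/andP[/eqP-> _] //|/andP[/eqP yy' /eqP fyy']].
  by move: dy dy'; rewrite fyy' -yy' => /ltn_trans/[apply]; rewrite ltnn.
have : #|[set y | y != r]| <= eG G.
  rewrite -(card_in_imset f_inj); apply: subset_leq_card; apply/subsetP => e /imsetP[y].
  by rewrite inE => yr ->; apply: in_Eset; case/andP: (fP y yr).
have -> : #|[set y | y != r]| = #|V G|.-1.
  by rewrite -(cardsC1 r); apply: eq_card => y; rewrite !inE.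
by case: #|V G|.
Qed.

Lemma connected_nV_le (G : sgraph) : connected G -> nV G <= (eG G).+1.
Proof.
move=> Gconn; case: (pickP (V G)) => [r _|V0]; last by rewrite /nV eq_card0.
by have [d descent] := ex_descent r Gconn; apply: card_le_eG_descent descent.
Qed.

(** * Extremal graphs *)

(* Classical: P may quantify over all graphs, so it is not decidable. *)
Lemma ex_max_nat (P : nat -> Prop) (B : nat) :
  (exists k, P k) -> (forall k, P k -> k <= B) ->
  exists m, P m /\ forall k, P k -> k <= m.
Proof.
elim: B => [|B IH] [k Pk] leB.
  by exists k; split => // k' /leB; rewrite leqn0 => /eqP->.
have [PB|nPB] := classic (P B.+1); first by exists B.+1.
apply: IH; first by exists k.
move=> k' Pk'; have := leB _ Pk'; rewrite leq_eqVlt => /orP[/eqP kB|//].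
by rewrite kB in Pk'.
Qed.

Lemma eL_le_exp2 (G : sgraph) : eL G <= 2 ^ eG G.
Proof.
rewrite /eG -card_powerset; apply: subset_leq_card; apply/subsetP => e /imset2P[a b aE].
by rewrite inE => /andP[bE _] ->; rewrite powersetE subUset !sub1set aE bE.
Qed.

Lemma conn_pairs_le (G : sgraph) : mindeg_ge1 G -> conn_pairs G <= (eG G * 2) ^ 2.
Proof.
move=> Gmin; have nV_le : #|V G| <= eG G * 2.
  by rewrite handshake -sum1_card; apply: leq_sum => v _; apply: Gmin.
by apply: leq_trans (max_card _) _; rewrite card_prod leq_mul.
Qed.

Lemma ex_is_f (N D : nat) : 2 <= D -> D <= N -> exists m, is_f N D m.
Proof.
move=> D2 DN; have [G [GN degD [c cD] _]] := ex_broom D2 N.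
have Gmax : maxdeg G = D by apply: maxdegE => //; exists c; rewrite cD (minn_idPr DN).
have := del_isolated_admissible (G := G); rewrite GN Gmax => /(_ (ltnW D2)) adm.
pose P k := exists2 H, admissible N D H & eL H = k.
have P_le k : P k -> k <= 2 ^ N by case=> H [HN _] <-; rewrite -HN eL_le_exp2.
have [m [[H admH <-] Hmax]] := ex_max_nat (ex_intro P _ (ex_intro2 _ _ _ adm erefl)) P_le.
by exists (eL H); split => [|H' admH']; [exists H | apply: Hmax; exists H'].
Qed.

Section Extremal.
Variable G : sgraph.
Hypotheses (Gmin : mindeg_ge1 G) (Gmaxdeg : 2 <= maxdeg G).
Hypothesis eL_max : forall H, admissible (eG G) (maxdeg G) H -> eL H <= eL G.
Hypothesis conn_pairs_max : forall H,
  admissible (eG G) (maxdeg G) H -> eL H = eL G -> conn_pairs H <= conn_pairs G.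

Lemma cycle_edge_spans z q a b : adj G z q -> adj G a b ->
  connect (adj_del z q) q z -> connect (adj G) z a.
Proof.
move=> zq ab zq_cycle; apply/idPn => nza.
have [H GH lt_conn] := switch_connects zq ab nza zq_cycle.
have Gadm : admissible (eG G) (maxdeg G) G by [].
have := conn_pairs_max (same_degseq_admissible GH Gadm) (same_degseq_eL GH).
by rewrite leqNgt lt_conn.
Qed.

Lemma leaves_connected l1 l2 : deg G l1 = 1 -> deg G l2 = 1 -> connect (adj G) l1 l2.
Proof.
move=> l1_leaf l2_leaf; apply/idPn => nl12.
have [t l2t] : exists t, adj G l2 t by apply: ex_neighbour; rewrite l2_leaf.
have nl1t : ~~ connect (adj G) l1 t.
  by apply: contra nl12 => l1t; apply: connect_adj l1t _; rewrite adj_sym.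
have tl2 : adj G t l2 by rewrite adj_sym.
have ntl1 : ~~ adj G t l1 by apply: contra nl1t => tl1; apply: connect1; rewrite adj_sym.
have tl1 : t != l1 by apply: contraNneq nl1t => ->; apply: connect0.
have l21 : l2 != l1 by apply: contraNneq nl12 => ->; apply: connect0.
have := @del_isolated_admissible (rotate G t l2 l1).
rewrite eG_rotate // maxdeg_rotate_leaves // => /(_ (ltnW Gmaxdeg))/eL_max.
by rewrite eL_del_isolated eL_rotate_leaves // ltnn.
Qed.

Lemma extremal_connected : connected G.
Proof.
have Gsym := sym_connect_sym (adj_sym G).
move=> x y; apply/idPn => nxy.
have [[l1 xl1 l1_leaf]|[z [q [xz zq zq_cycle]]]] := leaf_or_cycle_edge (Gmin x).
- have [[l2 yl2 l2_leaf]|[z [q [yz zq zq_cycle]]]] := leaf_or_cycle_edge (Gmin y).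
  + case/negP: nxy; apply: connect_trans xl1 _.
    by apply: connect_trans (leaves_connected l1_leaf l2_leaf) _; rewrite Gsym.
  + have [w xw] := ex_neighbour (Gmin x).
    case/negP: nxy; rewrite Gsym; apply: connect_trans yz _.
    exact: cycle_edge_spans zq xw zq_cycle.
- have [w yw] := ex_neighbour (Gmin y).
  by case/negP: nxy; apply: connect_trans xz (cycle_edge_spans zq yw zq_cycle).
Qed.

End Extremal.

Theorem mainTheorem10 (N D : nat) (hD : 2 <= D) (hND : D <= N) :
  exists G : sgraph,
    [/\ connected G, eG G = N, maxdeg G = D, is_f N D (eL G) & nV G <= N.+1].
Proof.
have [m [[G0 [adm0 eL0]] eL_max]] := ex_is_f hD hND.
pose P k := exists2 G, admissible N D G /\ eL G = m & conn_pairs G = k.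
have P_le k : P k -> k <= (N * 2) ^ 2.
  by case=> G [[GN [_ Gmin]] _] <-; rewrite -GN conn_pairs_le.
have [_ [[G [admG eLG] <-] conn_max]] :=
  ex_max_nat (ex_intro P _ (ex_intro2 _ _ _ (conj adm0 eL0) erefl)) P_le.
have [GN [GD Gmin]] := admG.
have Gconn : connected G.
  apply: extremal_connected; rewrite ?GN ?GD ?eLG //.
  by move=> H admH eLH; apply: conn_max; exists H.
exists G; split => //; first by rewrite eLG; split => //; exists G0.
by rewrite -GN connected_nV_le.
Qed.
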